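(* Let $k$ be a positive integer and $G$ a graph. Then $\gamma_{P,k}(G-e)>\gamma_{P,k}(G)$ for every edge $e$ of $G$ if and only if $G$ is a disjoint union of $k$-generalized spiders.
   Context: All graphs are finite and simple; $G-e$ is obtained by deleting the edge $e$. A $k$-generalized spider is a tree with at most one vertex of degree $k+2$ or more. $N_G[v]$ is the closed neighbourhood of $v$, and $N_G[S]$ the union of closed neighbourhoods of vertices of $S$. For $S\subseteq V(G)$, define $\mathcal{P}^{0}_{G,k}(S)=N_G[S]$ and $\mathcal{P}^{i+1}_{G,k}(S)=\bigcup\{N_G[v] : v\in \mathcal{P}^{i}_{G,k}(S),\ |N_G[v]\setminus \mathcal{P}^{i}_{G,k}(S)|\le k\}$; these increase and stabilize to $\mathcal{P}^{\infty}_{G,k}(S)$. $S$ is a $k$-power dominating set if $\mathcal{P}^{\infty}_{G,k}(S)=V(G)$; $\gamma_{P,k}(G)$ is the minimum size of such a set. *)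

(* A finite simple graph is a symmetric irreflexive
   relation g : rel T on a finite type T of vertices. *)
From mathcomp Require Import all_boot.
Set Implicit Arguments.
Unset Strict Implicit.
Unset Printing Implicit Defensive.

Section PowerDom.
Variable T : finType.

Definition cnbhd (g : rel T) (v : T) : {set T} := [set u | (u == v) || g v u].

Definition cnbhd_set (g : rel T) (S : {set T}) : {set T} :=
  \bigcup_(v in S) cnbhd g v.

Definition pstep (g : rel T) (k : nat) (P : {set T}) : {set T} :=
  \bigcup_(v in P | #|cnbhd g v :\: P| <= k) cnbhd g v.

Definition pobs (g : rel T) (k : nat) (S : {set T}) (i : nat) : {set T} :=
  iter i (pstep g k) (cnbhd_set g S).

(* P^infty_{G,k}(S): the sequence is increasing in a set of size #|T|,
   hence stable from step #|T| on. *)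
Definition pobs_inf (g : rel T) (k : nat) (S : {set T}) : {set T} :=
  pobs g k S #|T|.

Definition k_power_dominating (g : rel T) (k : nat) (S : {set T}) : bool :=
  pobs_inf g k S == [set: T].

(* gamma_{P,k}(G): minimum size of a k-power dominating set
   ([set: T] is always one, so #|T| is a valid default). *)
Definition kpd_number (g : rel T) (k : nat) : nat :=
  \big[minn/#|T|]_(S : {set T} | k_power_dominating g k S) #|S|.

Definition del_edge (g : rel T) (u v : T) : rel T :=
  [rel x y | g x y && ~~ (((x == u) && (y == v)) || ((x == v) && (y == u)))].

Definition deg (g : rel T) (v : T) : nat := #|[set u | g v u]|.

Definition acyclic (g : rel T) : Prop :=
  forall c : seq T, uniq c -> 2 < size c -> ~~ cycle g c.

(* G is a disjoint union of k-generalized spiders: each connected component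
   is a tree with at most one vertex of degree >= k+2. *)
Definition spider_forest (k : nat) (g : rel T) : Prop :=
  acyclic g /\
  forall u v : T, connect g u v -> k + 2 <= deg g u -> k + 2 <= deg g v -> u = v.

End PowerDom.

From mathcomp Require Import all_boot zify.
Set Implicit Arguments.
Unset Strict Implicit.
Unset Printing Implicit Defensive.

(* Fix a minimum k-power dominating set S of G and give every vertex outside S
   a parent: the vertex that observed it in the round it was first observed.
   An edge that is a parent edge for neither endpoint can be deleted without
   hurting S, so if every deletion raises gamma_{P,k}, every edge is a parent
   edge.  Ranks strictly decrease towards parents, so G is then a forest whose
   components each contain exactly one vertex of S; a vertex of degree >= k+2
   outside S would have k+1 children, which no single vertex can observe in
   one round, so such vertices all lie in S and are unique in their components.

   Conversely, in a disjoint union of k-generalized spiders the centre of a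
   component observes the whole component, because every other vertex has at
   most k+1 neighbours, one of which is already observed when it is reached.
   A minimum set for G - uv meets the components of u and v in G - uv, which
   merge in G; replacing each vertex by the centre of its G-component gives a
   strictly smaller k-power dominating set of G. *)

Section Propagation.
Variable T : finType.
Implicit Types (g : rel T) (k : nat) (S P : {set T}).

Lemma in_cnbhd g v w : (w \in cnbhd g v) = (w == v) || g v w.
Proof. by rewrite inE. Qed.

Lemma cnbhd_refl g v : v \in cnbhd g v.
Proof. by rewrite in_cnbhd eqxx. Qed.

Lemma pstepP g k P w :
  reflect (exists2 v, v \in P & (#|cnbhd g v :\: P| <= k) && (w \in cnbhd g v))
          (w \in pstep g k P).
Proof.
apply: (iffP bigcupP) => [[v /andP[vP small] wv]|[v vP /andP[small wv]]].
- by exists v; rewrite ?small.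
- by exists v; rewrite ?vP.
Qed.

Definition union_of_cnbhds g P :=
  forall w, w \in P -> exists2 v, v \in P & (w \in cnbhd g v) && (cnbhd g v \subset P).

Lemma union_of_cnbhds_sub_pstep g k P : union_of_cnbhds g P -> P \subset pstep g k P.
Proof.
move=> hP; apply/subsetP => w /hP [v vP /andP[wv sub]].
apply/pstepP; exists v; rewrite // wv andbT.
by move: sub; rewrite -setD_eq0 => /eqP ->; rewrite cards0.
Qed.

Lemma union_of_cnbhds_pstep g k P :
  union_of_cnbhds g P -> union_of_cnbhds g (pstep g k P).
Proof.
move=> hP w /pstepP [v vP /andP[small wv]].
exists v; first exact: (subsetP (union_of_cnbhds_sub_pstep k hP)).
rewrite wv; apply/subsetP => x xv; apply/pstepP; exists v; rewrite ?small ?xv //.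
Qed.

Lemma union_of_cnbhds_pobs g k S i : union_of_cnbhds g (pobs g k S i).
Proof.
elim: i => [|i IH]; last exact: union_of_cnbhds_pstep.
move=> w /bigcupP [s sS ws]; exists s; first by apply/bigcupP; exists s; rewrite ?cnbhd_refl.
by rewrite ws; apply/subsetP => x xs; apply/bigcupP; exists s.
Qed.

Lemma pobs_monotone g k S i j : i <= j -> pobs g k S i \subset pobs g k S j.
Proof.
move/subnK => <-; elim: (j - i) => [|d IH]; first by rewrite add0n.
rewrite addSn; apply: subset_trans IH (union_of_cnbhds_sub_pstep k _); exact: union_of_cnbhds_pobs.
Qed.

Lemma sub_pobs g k S i : S \subset pobs g k S i.
Proof.
apply: subset_trans (pobs_monotone _ _ _ (leq0n i)).
by apply/subsetP => s sS; apply/bigcupP; exists s; rewrite ?cnbhd_refl.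
Qed.

Lemma pobs_connect g k S i w : w \in pobs g k S i -> exists2 s, s \in S & connect g s w.
Proof.
elim: i w => [|i IH] w /=.
  by case/bigcupP => s sS; rewrite in_cnbhd => /predU1P[->|/connect1]; exists s.
case/pstepP => v /IH[s sS sv] /andP[_]; rewrite in_cnbhd => /predU1P[->|/connect1 vw].
  by exists s.
by exists s; last exact: connect_trans vw.
Qed.

Lemma kpd_connect g k S w : k_power_dominating g k S -> exists2 s, s \in S & connect g s w.
Proof.
by move/eqP=> obs; apply: (@pobs_connect g k S #|T|); rewrite -/(pobs_inf _ _ _) obs inE.
Qed.

Lemma kpd_setT g k : k_power_dominating g k [set: T].
Proof. by apply/eqP/eqP; rewrite eqEsubset subsetT sub_pobs. Qed.

Lemma bigminn_le_seq (I : eqType) (r : seq I) (P : pred I) (F : I -> nat) d i0 :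
  i0 \in r -> P i0 -> \big[minn/d]_(i <- r | P i) F i <= F i0.
Proof.
elim: r => // a r IH; rewrite inE big_cons => /predU1P[<- ->|ir Pi]; first exact: geq_minl.
by case: ifP => _; rewrite ?geq_min IH ?orbT.
Qed.

Lemma kpd_number_le g k S : k_power_dominating g k S -> kpd_number g k <= #|S|.
Proof. by move=> kS; apply: bigminn_le_seq; rewrite ?mem_index_enum. Qed.

Lemma kpd_number_attained g k :
  exists2 S, k_power_dominating g k S & #|S| = kpd_number g k.
Proof.
pose attained n := exists2 S, k_power_dominating g k S & #|S| = n.
suff [->|//] : kpd_number g k = #|T| \/ attained (kpd_number g k).
  by exists [set: T]; rewrite ?cardsT ?kpd_setT.
rewrite /kpd_number; elim/big_ind: _ => [|m n hm hn|S kS]; [by left| |by right; exists S].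
by rewrite /minn; case: ifP.
Qed.

End Propagation.

Section DeleteEdge.
Variables (T : finType) (g : rel T) (u v : T).

Lemma del_edge_sub : subrel (del_edge g u v) g.
Proof. by move=> x y /andP[]. Qed.

Lemma cnbhd_del_edge_sub x : cnbhd (del_edge g u v) x \subset cnbhd g x.
Proof.
apply/subsetP => y; rewrite !in_cnbhd.
by case/predU1P=> [->|/del_edge_sub ->]; rewrite ?eqxx ?orbT.
Qed.

End DeleteEdge.

Section Parent.
Variables (T : finType) (g : rel T) (k : nat) (S : {set T}).
Hypothesis kS : k_power_dominating g k S.

Local Notation P := (pobs g k S).

Lemma mem_pobs_card w : w \in P #|T|.
Proof. by move/eqP: kS; rewrite /pobs_inf => ->; rewrite inE. Qed.

Lemma observed w : exists i, w \in P i.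
Proof. by exists #|T|; apply: mem_pobs_card. Qed.

Definition round w := ex_minn (observed w).

Lemma mem_pobs_round w : w \in P (round w).
Proof. by rewrite /round; case: ex_minnP. Qed.

Lemma round_min w i : w \in P i -> round w <= i.
Proof. by rewrite /round; case: ex_minnP => n _; apply. Qed.

Lemma notin_pobs_lt_round w i : i < round w -> w \notin P i.
Proof. by rewrite ltnNge; apply: contra; apply: round_min. Qed.

Lemma round_leq_card w : round w <= #|T|.
Proof. exact/round_min/mem_pobs_card. Qed.

Lemma round_eqS w i : w \in P i.+1 -> w \notin P i -> round w = i.+1.
Proof.
move=> wPi1 wPi; apply/eqP; rewrite eqn_leq round_min //= ltnNge.
apply: contra wPi => /(pobs_monotone g k S)/subsetP; apply; exact: mem_pobs_round.
Qed.

Definition parent w :=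
  if w \in S then w else
  if round w is i.+1 then
    odflt w [pick v | [&& v \in P i, #|cnbhd g v :\: P i| <= k & w \in cnbhd g v]]
  else odflt w [pick s in S | w \in cnbhd g s].

Lemma parent_id w : w \in S -> parent w = w.
Proof. by rewrite /parent => ->. Qed.

Lemma round_S s : s \in S -> round s = 0.
Proof. by move=> sS; apply/eqP; rewrite -leqn0 round_min // (subsetP (sub_pobs _ _ _ _)). Qed.

Lemma parent_round0 w : w \notin S -> round w = 0 -> parent w \in S /\ g (parent w) w.
Proof.
move=> wS w0; rewrite /parent (negbTE wS) w0.
case: pickP => [s /andP[sS]|none] /=.
  by rewrite in_cnbhd => /predU1P[ws|]; [move: wS; rewrite ws sS|].
have := mem_pobs_round w; rewrite w0 => /bigcupP [s sS ws].
by have := none s; rewrite sS ws.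
Qed.

Lemma parent_roundS w i : w \notin S -> round w = i.+1 ->
  [/\ parent w \in P i, #|cnbhd g (parent w) :\: P i| <= k & g (parent w) w].
Proof.
move=> wS wi; rewrite /parent (negbTE wS) wi.
have wPi : w \notin P i by apply: notin_pobs_lt_round; rewrite wi.
case: pickP => [v /and3P[vP small]|none] /=.
  by rewrite in_cnbhd => /predU1P[wv|]; [move: wPi; rewrite wv vP|].
have := mem_pobs_round w; rewrite wi => /pstepP [v vP /andP[small wv]].
by have := none v; rewrite vP small wv.
Qed.

Lemma parent_adj w : w \notin S -> g (parent w) w.
Proof.
move=> wS; case wi: (round w) => [|i]; first by case: (parent_round0 wS wi).
by case: (parent_roundS wS wi).
Qed.

Section NonParentEdge.
Variables u v : T.
Hypotheses (uv : parent u != v) (vu : parent v != u).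

Lemma del_edge_parent w : w \notin S -> del_edge g u v (parent w) w.
Proof.
move=> wS; rewrite /del_edge /= parent_adj //=.
apply/norP; split; apply/andP => -[/eqP pE /eqP wE].
  by move: vu; rewrite -wE pE eqxx.
by move: uv; rewrite -wE pE eqxx.
Qed.

Lemma pobs_sub_del_edge i : P i \subset pobs (del_edge g u v) k S i.
Proof.
elim: i => [|i IH]; apply/subsetP => w wP.
  case wS: (w \in S); first by apply/bigcupP; exists w; rewrite ?cnbhd_refl.
  have w0 : round w = 0 by apply/eqP; rewrite -leqn0 round_min.
  have [pS _] := parent_round0 (negbT wS) w0.
  by apply/bigcupP; exists (parent w); rewrite // in_cnbhd del_edge_parent ?wS ?orbT.
case wPi: (w \in P i).
  by apply: (subsetP (pobs_monotone _ _ _ (leqnSn i))); apply: (subsetP IH).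
have wS : w \notin S by apply: contraFN wPi; apply: (subsetP (sub_pobs _ _ _ _)).
have [pP small _] := parent_roundS wS (round_eqS wP (negbT wPi)).
apply/pstepP; exists (parent w); first exact: (subsetP IH).
rewrite in_cnbhd del_edge_parent // orbT andbT; apply: leq_trans small.
by apply/subset_leq_card/setDSS; [apply: cnbhd_del_edge_sub|].
Qed.

Lemma kpd_del_edge : k_power_dominating (del_edge g u v) k S.
Proof.
apply/eqP/eqP; rewrite eqEsubset subsetT /=.
by apply: subset_trans (pobs_sub_del_edge #|T|); apply/subsetP => w _; apply: mem_pobs_card.
Qed.

End NonParentEdge.

Section ParentForest.
Hypotheses (gsym : symmetric g) (girr : irreflexive g).
Hypothesis parent_edges : forall x y, g x y -> (parent x == y) || (parent y == x).

Definition rank w := 2 * round w + (w \notin S).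

Lemma rank_parent w : w \notin S -> rank (parent w) < rank w.
Proof.
move=> wS; case wi: (round w) => [|i].
  by have [pS _] := parent_round0 wS wi; rewrite /rank wi round_S // pS wS.
have [pP _ _] := parent_roundS wS wi.
by have := round_min pP; rewrite /rank wi wS; case: (parent w \notin S) => /=; lia.
Qed.

Lemma parent_of_rank_geq w y : g w y -> rank y <= rank w -> parent w = y.
Proof.
move=> gwy le; case/orP: (parent_edges gwy) => /eqP // yw.
case yS: (y \in S); first by move: gwy; rewrite -yw parent_id // girr.
by have := rank_parent (negbT yS); rewrite yw; lia.
Qed.

(* Both cycle neighbours of a rank-maximal vertex would have to be its parent. *)
Lemma cycle_rank_max w p : uniq (w :: p) -> 2 < size (w :: p) -> cycle g (w :: p) ->
  {in w :: p, forall x, rank x <= rank w} -> False.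
Proof.
case: p => [|a [|b q]] // uwp _; rewrite /cycle rcons_path /= => /andP[/andP[gwa _] glw] wmax.
rewrite gsym in glw.
have lq : last b q \in b :: q by apply: mem_last.
have wpa : parent w = a by apply: parent_of_rank_geq gwa (wmax a _); rewrite !inE eqxx orbT.
have wpl : parent w = last b q.
  by apply: parent_of_rank_geq glw (wmax _ _); exact/mem_behead/mem_behead.
by move: uwp; rewrite -wpa wpl /= lq andbF.
Qed.

Lemma parent_forest_acyclic : acyclic g.
Proof.
move=> c uc sc; apply/negP => gc.
have [x0 x0c] : exists x, x \in c by case: c sc {uc gc} => [|x c] // _; exists x; apply: mem_head.
have [w wc wmax] := arg_maxnP rank x0c.
have [i p ec] := rot_to wc.
apply: (@cycle_rank_max w p); rewrite -ec ?rot_uniq ?size_rot ?rot_cycle //.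
by move=> x; rewrite mem_rot; apply: wmax.
Qed.

Definition children h := [set y | g h y & parent y == h].

Lemma deg_le_children h : deg g h <= #|children h| + 1.
Proof.
apply: (@leq_trans #|parent h |: children h|); last by rewrite cardsU1 addnC leq_add2l leq_b1.
apply/subset_leq_card/subsetP => y; rewrite !inE => ghy.
by case/orP: (parent_edges ghy) => [/eqP ->|->]; rewrite ?eqxx ?ghy ?orbT.
Qed.

Lemma high_degree_in_S h : k + 2 <= deg g h -> h \in S.
Proof.
move=> hdeg; apply: contraT => hS.
have [y0 y0C] : exists y, y \in children h.
  by apply/set0Pn; rewrite -card_gt0; have := deg_le_children h; lia.
(* The first child to be observed was observed by h while no other child was. *)
have [y yC ymin] := @arg_minnP _ y0 (mem (children h)) round y0C.
move: yC; rewrite !inE => /andP[ghy /eqP yh].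
have yS : y \notin S by apply: contraTN ghy => yS; rewrite -yh parent_id // girr.
case yi: (round y) => [|i]; first by case: (parent_round0 yS yi); rewrite yh (negbTE hS).
have [_ small _] := parent_roundS yS yi; rewrite yh in small.
suff : #|children h| <= k by have := deg_le_children h; lia.
apply: leq_trans small; apply/subset_leq_card/subsetP => z zC.
move: (zC); rewrite inE => /andP[ghz _]; rewrite in_setD in_cnbhd ghz orbT andbT.
by apply: notin_pobs_lt_round; rewrite (leq_trans _ (ymin z zC)) // yi.
Qed.

Definition ancestor w := iter (2 * #|T| + 2) parent w.

Lemma iter_parent_id n s : s \in S -> iter n parent s = s.
Proof. by move=> sS; elim: n => //= n ->; apply: parent_id. Qed.

Lemma iter_parent_in_S n w : rank w <= n -> iter n parent w \in S.
Proof.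
elim: n w => [|n IH] w wn.
  by move: wn; rewrite leqn0 /rank addn_eq0 eqb0 negbK => /andP[].
case wS: (w \in S); first by rewrite iter_parent_id.
by rewrite iterSr; apply: IH; have := rank_parent (negbT wS); lia.
Qed.

Lemma ancestor_parent w : ancestor (parent w) = ancestor w.
Proof.
rewrite /ancestor -iterSr iterS parent_id //; apply: iter_parent_in_S.
by have := round_leq_card w; rewrite /rank; case: (w \notin S) => /=; lia.
Qed.

Lemma ancestor_connect x y : connect g x y -> ancestor x = ancestor y.
Proof.
case/connectP => p + ->; elim: p x => //= z p IH x /andP[gxz /IH <-].
by case/orP: (parent_edges gxz) => /eqP <-; rewrite ancestor_parent.
Qed.

Lemma parent_forest_spider : spider_forest k g.
Proof.
split=> [|x y /ancestor_connect + /high_degree_in_S xS /high_degree_in_S yS].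
  exact: parent_forest_acyclic.
by rewrite /ancestor !iter_parent_id.
Qed.

End ParentForest.
End Parent.

Section Spider.
Variables (T : finType) (g : rel T) (k : nat).
Hypotheses (gsym : symmetric g) (girr : irreflexive g).

Lemma del_edge_sym u v : symmetric (del_edge g u v).
Proof.
move=> x y; rewrite /del_edge /= gsym; congr (_ && ~~ _).
by rewrite orbC; do 4 case: (_ == _).
Qed.

Lemma acyclic_bridge u v : acyclic g -> g u v -> ~~ connect (del_edge g u v) u v.
Proof.
move=> ac guv; apply/negP => /connectP [p0 /shortenP[p gp up _] vl].
case: p gp up vl => [|a [|b q]] gp up vl.
- by move: guv; rewrite vl girr.
- by move: gp; rewrite /= vl /del_edge /= !eqxx andbF.
apply/negP: (ac (u :: a :: b :: q) up isT).
by rewrite /cycle rcons_path (sub_path (@del_edge_sub T g u v) gp) -vl gsym guv.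
Qed.

Lemma card_cnbhd y : #|cnbhd g y| = (deg g y).+1.
Proof.
rewrite (_ : cnbhd g y = y |: [set u | g y u]); last by apply/setP => z; rewrite !inE.
by rewrite cardsU1 inE girr.
Qed.

Lemma cnbhd_pstep (P : {set T}) x y : g x y -> cnbhd g x \subset P -> deg g y <= k.+1 ->
  cnbhd g y \subset pstep g k P.
Proof.
move=> gxy xP ydeg; have yx : y != x by apply: contraTneq gxy => ->; rewrite girr.
have sub_P z : z \in [set x; y] -> z \in P.
  by rewrite !inE => /orP[] /eqP->; apply: (subsetP xP); rewrite in_cnbhd ?eqxx ?gxy ?orbT.
apply/subsetP => z zy; apply/pstepP; exists y; first by apply: sub_P; rewrite !inE eqxx orbT.
rewrite zy andbT; apply: (@leq_trans #|cnbhd g y :\: [set x; y]|).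
  by apply/subset_leq_card/setDS/subsetP.
have xyN : [set x; y] \subset cnbhd g y.
  by apply/subsetP => t; rewrite !inE => /orP[] /eqP->; rewrite ?eqxx ?(gsym y x) ?gxy ?orbT.
by rewrite cardsD (setIidPr xyN) card_cnbhd cards2 eq_sym yx; lia.
Qed.

Lemma pobs_path (S : {set T}) j x p : path g x p -> cnbhd g x \subset pobs g k S j ->
  {in p, forall y, deg g y <= k.+1} -> cnbhd g (last x p) \subset pobs g k S (j + size p).
Proof.
elim: p x j => [|y p IH] x j /=; first by rewrite addn0.
move=> /andP[gxy gp] xP low; rewrite -addSnnS; apply: IH => //.
  by apply: cnbhd_pstep gxy xP _; apply: low; apply: mem_head.
by move=> z zp; apply: low; rewrite inE zp orbT.
Qed.

Lemma component_observed (S : {set T}) c w : c \in S -> connect g c w ->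
  (forall y, connect g c y -> y != c -> deg g y <= k.+1) -> w \in pobs_inf g k S.
Proof.
move=> cS /connectP[p0 /shortenP[p gp up _] ->] low.
have cP : cnbhd g c \subset pobs g k S 0 by apply/subsetP => z zc; apply/bigcupP; exists c.
have plow : {in p, forall y, deg g y <= k.+1}.
  move=> y yp; apply: low; first by apply: (path_connect gp); rewrite inE yp orbT.
  by apply: contraTneq yp => ->; case/andP: up.
have size_p : size p <= #|T|.
  by move/card_uniqP: up => /= cp; have := max_card (mem (c :: p)); rewrite cp /=; lia.
apply: (subsetP (pobs_monotone g k S size_p)); apply: (subsetP (pobs_path gp cP plow)).
exact: cnbhd_refl.
Qed.

Let gcsym : connect_sym g := sym_connect_sym gsym.

Definition centre w := odflt (root g w) [pick h | connect g w h && (k + 2 <= deg g h)].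

Lemma connect_centre w : connect g w (centre w).
Proof. by rewrite /centre; case: pickP => [h /andP[]|_] //=; apply: connect_root. Qed.

Lemma centre_connect w w' : connect g w w' -> centre w = centre w'.
Proof.
move=> ww'; rewrite /centre (rootP gcsym ww'); congr odflt; apply: eq_pick => h /=.
by rewrite (same_connect gcsym ww').
Qed.

Lemma deg_off_centre w y : spider_forest k g ->
  connect g (centre w) y -> y != centre w -> deg g y <= k.+1.
Proof.
case=> _ high_eq cy; apply: contraR; rewrite -ltnNge => ydeg.
have wy : connect g w y := connect_trans (connect_centre w) cy.
rewrite /centre; case: pickP => [h /andP[wh hdeg]|/(_ y)] /=; last by rewrite wy addn2 ydeg.
apply/eqP/high_eq => //; last by rewrite addn2.
by rewrite gcsym; apply: connect_trans wy; rewrite gcsym.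
Qed.

Lemma kpd_number_del_edge u v : spider_forest k g -> g u v ->
  kpd_number g k < kpd_number (del_edge g u v) k.
Proof.
move=> sf guv; have [S kS <-] := kpd_number_attained (del_edge g u v) k.
have del_connect x y : connect (del_edge g u v) x y -> connect g x y.
  by apply: connect_sub => a b /del_edge_sub /connect1.
have kS' : k_power_dominating g k (centre @: S).
  apply/eqP/eqP; rewrite eqEsubset subsetT /=; apply/subsetP => w _.
  have [s sS /del_connect sw] := kpd_connect w kS.
  apply: (@component_observed _ (centre s)); first exact: imset_f.
    by apply: connect_trans sw; rewrite gcsym connect_centre.
  by move=> y; apply: deg_off_centre.
have [su suS usu] := kpd_connect u kS.
have [sv svS vsv] := kpd_connect v kS.
have su_sv : su != sv.
  apply: contraTneq (acyclic_bridge sf.1 guv) => eq_s; rewrite negbK.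
  rewrite (sym_connect_sym (@del_edge_sym u v)) in usu.
  by apply: connect_trans usu _; rewrite eq_s.
have centre_eq : centre su = centre sv.
  apply: centre_connect; apply: connect_trans (del_connect _ _ usu) _.
  by apply: connect_trans (connect1 guv) _; rewrite gcsym; apply: del_connect.
apply: leq_ltn_trans (kpd_number_le kS') _; rewrite ltn_neqAle leq_imset_card andbT.
by apply: contra su_sv => /imset_injP inj; rewrite (inj _ _ suS svS centre_eq).
Qed.

End Spider.

Theorem mainTheorem3 (T : finType) (g : rel T) (k : nat)
  (gsym : symmetric g) (girr : irreflexive g) (kpos : 0 < k) :
  (forall u v : T, g u v -> kpd_number g k < kpd_number (del_edge g u v) k)
  <-> spider_forest k g.
Proof.
split=> [edge_critical|sf u v guv]; last exact: kpd_number_del_edge.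
have [S kS eS] := kpd_number_attained g k.
apply: (parent_forest_spider (kS := kS) gsym girr) => x y gxy.
apply: contraT; rewrite negb_or => /andP[xy yx].
by have := kpd_number_le (kpd_del_edge xy yx); rewrite eS leqNgt edge_critical.
Qed.
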